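(* Let $k\ge 2$, let $H$ be a digraph (possibly with loops), and let $D$ be an $H$-colored local in-tournament. If every directed cycle in $D$ has $H$-length at most $k-2$, then $D$ has a $(k,H)$-kernel.
   Context: All digraphs are finite. A local in-tournament is a digraph $D$ such that for every vertex $x$, the subdigraph induced by the in-neighbourhood $N^-(x)$ is a tournament (every two distinct vertices joined by exactly one arc). $D$ has no loops and comes with a map $\rho: A(D)\to V(H)$. For a walk $W=(x_0,\ldots,x_n)$ in $D$, there is an obstruction on $x_i$ if $(\rho(x_{i-1},x_i),\rho(x_i,x_{i+1})) \notin A(H)$; for an open walk this is considered at internal vertices $x_i$, $1\le i\le n-1$, for a closed walk (such as a cycle) at all $i\in\{0,\ldots,n-1\}$ with indices modulo $n$. $O_H(W)$ is the set of indices with an obstruction; the $H$-length is $l_H(W)=|O_H(W)|+1$ for open $W$ and $|O_H(W)|$ for closed $W$. A $(k,H)$-kernel ($k\ge2$) is a set $S\subseteq V(D)$ such that for every two distinct $u,v\in S$ every directed $uv$-path in $D$ has $H$-length at least $k$, and for every $x\in V(D)\setminus S$ there is a directed path from $x$ to a vertex of $S$ of $H$-length at most $k-1$. *)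

From mathcomp Require Import all_boot.
Set Implicit Arguments. Unset Strict Implicit. Unset Printing Implicit Defensive.

(* The H-colouring
   rho : A(D) -> V(H) is given as a total function rho : V -> V -> C; only its
   values on arcs of D are ever used. *)

Section HColoured.
Variables (V C : finType) (a : rel V) (h : rel C) (rho : V -> V -> C).

Definition local_in_tournament : Prop :=
  forall x u v, a u x -> a v x -> u != v -> addb (a u v) (a v u).

Fixpoint obs_open (w : seq V) : nat :=
  match w with
  | x :: ((y :: z :: _) as t) => (~~ h (rho x y) (rho y z)) + obs_open t
  | _ => 0
  end.

Definition Hlen_open (w : seq V) : nat := obs_open w + 1.

(* H-length of a closed walk given by its vertex sequence c = (x_0,...,x_{n-1})
   (arcs x_i -> x_{i+1 mod n}); obstructions are counted at every x_i. *)
Definition Hlen_closed (c : seq V) : nat :=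
  match c with
  | [::] => 0
  | x0 :: c' => obs_open (last x0 c' :: rcons c x0)
  end.

Definition dpath (u v : V) (p : seq V) : bool :=
  [&& path a u p, last u p == v & uniq (u :: p)].

Definition dcycle (c : seq V) : bool :=
  [&& c != [::], uniq c & cycle a c].

Definition kH_kernel (k : nat) (S : {set V}) : Prop :=
  (forall u v, u \in S -> v \in S -> u != v ->
     forall p, dpath u v p -> k <= Hlen_open (u :: p)) /\
  (forall x, x \notin S ->
     exists v p, [/\ v \in S, dpath x v p & Hlen_open (x :: p) <= k - 1]).

End HColoured.

From mathcomp Require Import all_boot.
From Stdlib Require Import Classical.
Set Implicit Arguments. Unset Strict Implicit. Unset Printing Implicit Defensive.

(* Two distinct vertices of a local in-tournament that reach each other lie on
   a common directed cycle.  Lying on a common cycle is transitive: if z lies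
   on a cycle through y but not on a cycle C through x and y, the segment of
   the second cycle around z is an ear of C, and since two in-neighbours of a
   vertex are adjacent, the ear can be absorbed into C one vertex at a time
   while keeping x on it.  The arc of the common cycle from x to y has at most
   as many obstructions as the whole cycle, so mutually reachable vertices
   absorb each other within H-length k - 1.  For any relation sandwiched
   between mutual reachability and reachability an independent absorbing set
   exists: treat a source strong component, then recurse on the rest. *)

Section SeqSplit.
Variables (T : Type) (P : pred T).

Lemma split_first s : has P s ->
  exists s1 x s2, [/\ s = s1 ++ x :: s2, P x & ~~ has P s1].
Proof. by case/split_find => x s1 s2 Px Ns1; exists s1, x, s2; rewrite cat_rcons. Qed.

Lemma split_last s : has P s ->
  exists s1 x s2, [/\ s = s1 ++ x :: s2, P x & ~~ has P s2].
Proof.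
rewrite -has_rev => /split_first[s1 [x [s2 [Es Px Ns1]]]].
exists (rev s2), x, (rev s1); rewrite has_rev.
by split=> //; rewrite -[s]revK Es rev_cat rev_cons cat_rcons.
Qed.

End SeqSplit.

Lemma uniq_cat_neq (T : eqType) (s1 s2 : seq T) x y :
  uniq (s1 ++ s2) -> x \in s1 -> y \in s2 -> x != y.
Proof.
rewrite cat_uniq => /and3P[_ /hasPn s2_s1 _] xs1 ys2.
by apply: contraTneq xs1 => ->; exact: s2_s1.
Qed.

Section Cycles.
Variables (V : finType) (a : rel V).

Definition on_cycle (x y : V) := exists c, [/\ dcycle a c, x \in c & y \in c].

Lemma dcycle_rot_head c x : dcycle a c -> x \in c ->
  exists q, dcycle a (x :: q) /\ perm_eq c (x :: q).
Proof.
move=> /and3P[_ Uc Cc] xc; exists (drop (index x c).+1 c ++ take (index x c) c).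
rewrite -rot_index // perm_sym perm_rot; split=> //.
by rewrite /dcycle rot_uniq rot_cycle Uc Cc rot_index.
Qed.

Lemma cycle_ear (S : pred V) c y z : dcycle a c -> y \in c -> z \in c ->
    S y -> ~~ S z ->
  exists c0 e c1, [/\ S c0 && S c1, path a c0 (rcons e c1), uniq e,
                      ~~ has S e & z \in e].
Proof.
move=> Dc yc zc Sy Nz; have [q [/and3P[_ Uq Cq] Ec]] := dcycle_rot_head Dc yc.
have zq : z \in q.
  by move: zc; rewrite (perm_mem Ec) inE; case: eqP Nz => // ->; rewrite Sy.
case/splitPr: zq Uq Cq => q1 q2 Uq Cq.
have [s1 [c0 [s2 [EA Sc0 Ns2]]]] : exists s1 c0 s2,
    [/\ y :: q1 = s1 ++ c0 :: s2, S c0 & ~~ has S s2].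
  by apply: split_last; rewrite /= Sy.
have [v1 [c1 [v2 [EB Sc1 Nv1]]]] : exists v1 c1 v2,
    [/\ rcons q2 y = v1 ++ c1 :: v2, S c1 & ~~ has S v1].
  by apply: split_first; rewrite has_rcons Sy.
exists c0, (s2 ++ z :: v1), c1; set e := s2 ++ z :: v1.
have EW : y :: rcons (q1 ++ z :: q2) y = s1 ++ (c0 :: rcons e c1) ++ v2.
  by rewrite /e rcons_cat rcons_cons -cat_cons EA EB -!catA /= cat_rcons -catA.
split; first by rewrite Sc0 Sc1.
- have : sorted a (y :: rcons (q1 ++ z :: q2) y) := Cq.
  by rewrite EW => /(infix_sorted (infix_infix _ _ _)).
- have : uniq (behead (y :: rcons (q1 ++ z :: q2) y)).
    by rewrite /= rcons_uniq.
  rewrite EW; apply: infix_uniq; apply/infixP.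
  by case: s1 {EA EW} => [|w s1]; [exists [::] | exists (s1 ++ [:: c0])];
    exists (c1 :: v2); rewrite /= ?cat_rcons // -catA.
- by rewrite has_cat /= (negbTE Nz) /= negb_or Ns2.
- by rewrite mem_cat inE eqxx orbT.
Qed.

Hypothesis a_lit : local_in_tournament a.

Lemma ear_on_cycle_head x y c de e : cycle a (x :: de) -> uniq (x :: de ++ e) ->
  c \in x :: de -> path a c (rcons e x) -> y \in e -> on_cycle x y.
Proof.
move=> Cde Ude cde Pe ye; case/splitPl: cde Cde Ude => p1 p2 Lp1 Cde Ude.
have Pp1 : path a x p1 by move: Cde; rewrite /= rcons_cat cat_path => /andP[].
have Ucyc : uniq (x :: p1 ++ e).
  apply: subseq_uniq Ude; rewrite -catA.
  exact: (cat_subseq (subseq_refl (x :: p1)) (suffix_subseq p2 e)).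
exists (x :: p1 ++ e); split; last by rewrite inE mem_cat ye !orbT.
  by rewrite /dcycle Ucyc /= rcons_cat cat_path Pp1 Lp1.
exact: mem_head.
Qed.

(* The cycle through x is x :: al ++ de and the ear c ~> e ~> last x al enters
   it at the end of al.  Let u be the last vertex of e and w the predecessor of
   the entry point cj: both are in-neighbours of cj, so either u -> w and the
   ear may enter at w instead (al shrinks), or w -> u and u can be inserted
   into the cycle between w and cj (e shrinks). *)
Lemma ear_on_cycle_rec x y c e al de :
  cycle a (x :: al ++ de) -> uniq (x :: al ++ de ++ e) -> c \in x :: al ++ de ->
  path a c (rcons e (last x al)) -> y \in e -> on_cycle x y.
Proof.
elim/last_ind: e al de => [|e u IHe] al de; first by move=> ? ? ? ?; rewrite in_nil.
elim/last_ind: al de => [|al cj IHal] de Cyc Uniq cin.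
  exact: (ear_on_cycle_head Cyc Uniq cin).
rewrite last_rcons rcons_path last_rcons => /andP[Pe auc] ye.
set w := last x al.
move: (Cyc); rewrite /= rcons_cat cat_path rcons_path last_rcons.
case/andP=> /andP[Pal awcj] Pde.
have uw : u != w.
  rewrite eq_sym; apply: (@uniq_cat_neq _ (x :: al) (cj :: de ++ rcons e u)).
  - by rewrite /= -cat_rcons.
  - exact: mem_last.
  - by rewrite inE mem_cat mem_rcons mem_head !orbT.
have [auw | awu] : a u w \/ a w u.
  by move: (a_lit auc awcj uw); case: (a u w); [left | right].
  by apply: (IHal (cj :: de)); rewrite -?cat_rcons // rcons_path Pe last_rcons auw.
set l := rcons al u ++ cj :: de.
have Cl : cycle a (x :: l).
  by rewrite /= rcons_cat cat_path rcons_path last_rcons /= Pal awu auc.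
have Ul : uniq (x :: l ++ e).
  suff /perm_uniq -> : perm_eq (x :: l ++ e) (x :: rcons al cj ++ de ++ rcons e u) by [].
  rewrite perm_cons /l -catA !cat_rcons perm_cat2l perm_sym.
  by rewrite -rcons_cat -rcons_cons perm_rcons.
have cl : c \in x :: l.
  move: cin; rewrite /l !(inE, mem_cat, mem_rcons).
  by case/or3P=> [-> | /orP[] -> | ->]; rewrite ?orbT.
case: (eqVneq u y) => [<- | uy].
  exists (x :: l); split; last by rewrite inE mem_cat mem_rcons mem_head orbT.
    by move: Ul; rewrite /dcycle Cl -cat_cons cat_uniq => /andP[->].
  exact: mem_head.
apply: (IHe (rcons al u) (cj :: de)); rewrite ?last_rcons ?catA //.
by move: ye; rewrite mem_rcons inE eq_sym (negbTE uy).
Qed.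

Lemma ear_on_cycle c x y c0 e c1 : dcycle a c -> x \in c -> c0 \in c -> c1 \in c ->
  path a c0 (rcons e c1) -> uniq (c ++ e) -> y \in e -> on_cycle x y.
Proof.
move=> Dc xc c0c c1c Pe Ue ye; have [q [/and3P[_ _ Cq] Ec]] := dcycle_rot_head Dc xc.
move: c0c c1c; rewrite !(perm_mem Ec) => c0c c1c.
rewrite (perm_uniq (perm_cat Ec (perm_refl e))) in Ue.
case/splitPl: c1c Cq Ue c0c Pe => al de <- Cq Ue c0c Pe.
by apply: ear_on_cycle_rec Cq _ c0c Pe ye; rewrite cat_cons -catA in Ue.
Qed.

Lemma on_cycle_trans x y z : on_cycle x y -> on_cycle y z -> on_cycle x z.
Proof.
move=> [c [Dc xc yc]] [c' [Dc' yc' zc']].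
have [zc | zNc] := boolP (z \in c); first by exists c.
have [c0 [e [c1 [/andP[c0c c1c] Pe Ue Ne ze]]]] :=
  cycle_ear (S := mem c) Dc' yc' zc' yc zNc.
apply: (ear_on_cycle Dc xc c0c c1c Pe _ ze).
by rewrite cat_uniq Ue andbT; case/and3P: Dc => _ -> _.
Qed.

Lemma arc_on_cycle u v : a u v -> connect a v u -> u != v -> on_cycle u v.
Proof.
move=> auv /connectP[p Pp Eu]; rewrite {u}Eu in auv *.
case/shortenP: Pp auv => p' Pp' Up' _ auv Nuv.
exists (v :: p'); split; [ | exact: mem_last | exact: mem_head].
by rewrite /dcycle Up' /= rcons_path Pp' auv.
Qed.

Lemma connect_on_cycle x y : connect a x y -> connect a y x -> x != y -> on_cycle x y.
Proof.
case/connectP=> p; elim: p x => [|v p IHp] x /=; first by move=> _ -> _; rewrite eqxx.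
move=> /andP[axv Pv] Ey back Nxy.
have vy : connect a v y by apply/connectP; exists p.
have yv : connect a y v := connect_trans back (connect1 axv).
have vx : connect a v x := connect_trans vy back.
have [Evy | Nvy] := eqVneq v y; first by rewrite -Evy in Nxy *; exact: arc_on_cycle.
have [Exv | Nxv] := eqVneq x v; first by rewrite Exv; exact: IHp.
exact: on_cycle_trans (arc_on_cycle axv vx Nxv) (IHp v Pv Ey yv Nvy).
Qed.

End Cycles.

Section Obstructions.
Variables (V C : finType) (a : rel V) (h : rel C) (rho : V -> V -> C).

Lemma leq_obs_open_cons x s : obs_open h rho s <= obs_open h rho (x :: s).
Proof. by case: s => [|y [|z s]] //=; rewrite leq_addl. Qed.

Lemma leq_obs_open_cat s1 s2 : obs_open h rho s1 <= obs_open h rho (s1 ++ s2).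
Proof. by elim: s1 => [|x [|y [|z s1]] IHs1] //=; rewrite leq_add2l. Qed.

Lemma dcycle_arc x q y : dcycle a (x :: q) -> y \in q ->
  exists p, dpath a x y p /\ obs_open h rho (x :: p) <= Hlen_closed h rho (x :: q).
Proof.
move=> /and3P[_ Uq Cq] yq; case/splitPr: yq Uq Cq => q1 q2 Uq Cq.
have Ecyc : rcons (x :: q1 ++ y :: q2) x = (x :: rcons q1 y) ++ rcons q2 x.
  by rewrite rcons_cons rcons_cat rcons_cons -cat_rcons.
exists (rcons q1 y); split.
- apply/and3P; split; [ | by rewrite last_rcons | ].
  - have : sorted a (rcons (x :: q1 ++ y :: q2) x) := Cq.
    by rewrite Ecyc => /cat_sorted2[].
  - by move: Uq; rewrite -cat_rcons -cat_cons cat_uniq => /andP[].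
- by apply: leq_trans (leq_obs_open_cons _ _); rewrite Ecyc leq_obs_open_cat.
Qed.

End Obstructions.

Section PreorderKernel.
Variables (T : finType) (reach : rel T) (R : T -> T -> Prop).
Hypotheses (reach_refl : reflexive reach) (reach_trans : transitive reach).
Hypotheses (R_reach : forall x y, R x y -> reach x y)
  (reach_R : forall x y, x != y -> reach x y -> reach y x -> R x y).

Definition R_independent (S : {set T}) :=
  forall u v, u \in S -> v \in S -> u != v -> ~ R u v.

Definition R_absorbing (U S : {set T}) :=
  forall x, x \in U -> x \notin S -> exists2 v, v \in S & R x v.

Lemma exists_source (U : {set T}) x0 : x0 \in U ->
  exists2 x, x \in U & {in U, forall y, reach y x -> reach x y}.
Proof.
move=> x0U; pose In x := [set y in U | reach y x].
have [x xU xmin] := arg_minnP (fun x => #|In x|) x0U.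
exists x => // y yU ryx; have {}xU : x \in U := xU.
have sub : In y \subset In x.
  by apply/subsetP => w; rewrite !inE => /andP[-> rwy]; exact: reach_trans rwy ryx.
have /eqP EIn : In y == In x by rewrite eqEcard sub xmin.
have : x \in In y by rewrite EIn inE xU reach_refl.
by rewrite inE => /andP[].
Qed.

(* X is the strong component of a source x of U: nothing else in U reaches X,
   so a vertex of X added to the kernel S' of U :\: X is never absorbed by S'. *)
Lemma preorder_kernel_in (U : {set T}) :
  exists S : {set T}, [/\ S \subset U, R_independent S & R_absorbing U S].
Proof.
elim: {U}_.+1 {-2}U (ltnSn #|U|) => // n IHn U ltUn.
have [-> | [x0 x0U]] := set_0Vmem U.
  by exists set0; split=> [|u v|y]; rewrite ?sub0set ?inE.
have [x xU xsrc] := exists_source x0U.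
pose X := [set y in U | reach y x].
have XU : X \subset U by apply/subsetP => y; rewrite inE => /andP[].
have Xreach y z : y \in X -> z \in X -> reach y z.
  rewrite !inE => /andP[_ ryx] /andP[zU rzx]; exact: reach_trans ryx (xsrc z zU rzx).
have [|S' [S'sub indep' absorb']] := IHn (U :\: X).
  rewrite -ltnS (leq_trans _ ltUn) // ltnS proper_card //; apply/properP.
  by split; [exact: subsetDl | exists x; rewrite ?inE ?xU ?reach_refl].
have S'U : S' \subset U := subset_trans S'sub (subsetDl U X).
have S'X s : s \in S' -> s \notin X.
  by move/(subsetP S'sub); rewrite inE => /andP[].
have [Xabs | [z zX zfree]] : (forall y, y \in X -> exists2 s, s \in S' & R y s) \/
    exists2 z, z \in X & forall s, s \in S' -> ~ R z s.
- apply: NNPP => Nor; apply: (Nor); left=> y yX; apply: NNPP => Ny.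
  by apply: (Nor); right; exists y => // s sS Rys; apply: Ny; exists s.
- exists S'; split=> // y yU yS.
  by case: (boolP (y \in X)) => [/Xabs // | yX]; apply: absorb' => //; rewrite inE yX.
have zU : z \in U := subsetP XU z zX.
exists (z |: S'); split.
- by rewrite subUset sub1set zU.
- have Nsz s : s \in S' -> ~ R s z.
    move=> sS /R_reach rsz; have := S'X s sS; rewrite inE (subsetP S'U s sS) /=.
    by rewrite (reach_trans rsz (Xreach z x zX _)) // inE xU reach_refl.
  move=> u v; rewrite !inE => /orP[/eqP-> | uS] /orP[/eqP-> | vS] //.
  + by rewrite eqxx.
  + by move=> _; exact: zfree.
  + by move=> _; exact: Nsz.
  + exact: indep'.
- move=> y yU; rewrite !inE negb_or => /andP[yz yS].
  case: (boolP (y \in X)) => [yX | yX]; last first.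
    have [|v vS Ryv] := absorb' y _ yS; first by rewrite inE yX.
    by exists v; rewrite // inE vS orbT.
  by exists z; rewrite ?inE ?eqxx //; apply: reach_R; rewrite ?Xreach.
Qed.

End PreorderKernel.

Theorem theorem27 (V C : finType) (a : rel V) (h : rel C)
    (rho : V -> V -> C) (k : nat) :
  2 <= k ->
  irreflexive a ->
  local_in_tournament a ->
  (forall c : seq V, dcycle a c -> Hlen_closed h rho c <= k - 2) ->
  exists S : {set V}, kH_kernel a h rho k S.
Proof.
move=> k2 _ a_lit short_cycles.
pose R x y := exists p, dpath a x y p /\ Hlen_open h rho (x :: p) <= k - 1.
have R_connect x y : R x y -> connect a x y.
  by move=> [p [/and3P[Pp /eqP <- _] _]]; apply/connectP; exists p.
have connect_R x y : x != y -> connect a x y -> connect a y x -> R x y.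
  move=> Nxy Cxy Cyx; have [c [Dc xc yc]] := connect_on_cycle a_lit Cxy Cyx Nxy.
  have [q [Dq Ec]] := dcycle_rot_head Dc xc.
  have yq : y \in q by move: yc; rewrite (perm_mem Ec) inE eq_sym (negbTE Nxy).
  have [p [Dp Op]] := dcycle_arc h rho Dq yq.
  exists p; split=> //; rewrite /Hlen_open addn1 -subSS subSn // ltnS.
  exact: leq_trans Op (short_cycles _ Dq).
have [S [_ indep absorb]] :=
  preorder_kernel_in (@connect0 _ a) (@connect_trans _ a) R_connect connect_R [set: V].
exists S; split=> [u v uS vS Nuv p Dp | x xS].
  rewrite leqNgt; apply/negP => lt_k; apply: (indep u v uS vS Nuv).
  by exists p; split=> //; rewrite subn1 -ltnS prednK // (leq_trans _ k2).
by have [v vS [p [Dp Hp]]] := absorb x (in_setT x) xS; exists v, p.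
Qed.
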